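(* For $d\in\mathbb{N}$ let $\zeta_d\in\mathbb{C}$ be a primitive $d$-th root of unity. The following are equivalent: (i) for every $n\in\mathbb{N}$ the number of frieze patterns of height $n$ over $\mathbb{Z}[\zeta_d]\setminus\{0\}$ is finite; (ii) $\mathbb{Z}[\zeta_d]$ is a discrete subset of $\mathbb{C}$; (iii) the group of units of $\mathbb{Z}[\zeta_d]$ is finite; (iv) $d\in\{1,2,3,4,6\}$.
   Context: A frieze pattern of height $n$ over $S\subseteq\mathbb{C}$ is a family $(c_{i,j})_{i\in\mathbb{Z},\ i\le j\le i+n+3}$ of complex numbers such that: - $c_{i,i}=c_{i,i+n+3}=0$ and $c_{i,i+1}=c_{i,i+n+2}=1$; - $c_{i,j}\in S$ for $i+2\le j\le i+n+1$; - every adjacent $2\times2$ determinant $c_{i,j}c_{i+1,j+1}-c_{i,j+1}c_{i+1,j}$ (all entries defined) equals $1$. *)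

(* the complex numbers are modelled by algC (algebraic complex
   numbers), which suffices since every set involved lies in Q-bar. *)
From HB Require Import structures.
From mathcomp Require Import all_boot all_order all_algebra all_field.
Set Implicit Arguments. Unset Strict Implicit. Unset Printing Implicit Defensive.
Import Order.TTheory GRing.Theory Num.Theory.
Local Open Scope ring_scope.

Definition Zring (z : algC) (x : algC) : Prop :=
  exists s : seq int, x = \sum_(i < size s) (s`_i)%:~R * z ^+ i.

(* A frieze pattern of height n over S: the family (c i j) for i in Z,
   i <= j <= i+n+3 (values of c outside this range are irrelevant). *)
Definition is_frieze (n : nat) (S : algC -> Prop) (c : int -> int -> algC) : Prop :=
  [/\ forall i : int, c i i = 0 /\ c i (i + n%:Z + 3) = 0,
      forall i : int, c i (i + 1) = 1 /\ c i (i + n%:Z + 2) = 1,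
      forall i j : int, i + 2 <= j <= i + n%:Z + 1 -> S (c i j)
    & forall i j : int, i + 1 <= j <= i + n%:Z + 2 ->
        c i j * c (i + 1) (j + 1) - c i (j + 1) * c (i + 1) j = 1].

Definition frieze_agree (n : nat) (c c' : int -> int -> algC) : Prop :=
  forall i j : int, i <= j <= i + n%:Z + 3 -> c i j = c' i j.

Definition finitely_many_friezes (n : nat) (S : algC -> Prop) : Prop :=
  exists (N : nat) (f : 'I_N -> int -> int -> algC),
    forall c, is_frieze n S c -> exists k : 'I_N, frieze_agree n c (f k).

Definition discrete_subset (S : algC -> Prop) : Prop :=
  forall x, S x -> exists2 eps : algC, 0 < eps &
    forall y, S y -> y != x -> eps <= `|y - x|.

Definition finite_units_Zring (z : algC) : Prop :=
  exists s : seq algC, forall u, Zring z u -> (exists2 v, Zring z v & u * v = 1) -> u \in s.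

From mathcomp Require Import all_boot all_order all_algebra all_field zify ring.
From Stdlib Require Import ClassicalEpsilon.
Import Order.TTheory GRing.Theory Num.Theory.
Local Open Scope ring_scope.

(* For d in {1, 2, 3, 4, 6}, z is a root of X^2 - t X + 1 with |t| <= 2, so
   Z[z] = Z + Z z is a lattice whose nonzero points have norm at least 1: it is
   discrete, has finitely many points in every disc, hence finitely many units.
   The entries of a frieze over such a set are bounded in terms of its height
   (the 2x2 determinant rule bounds each diagonal by the next one), and a
   frieze is determined by one of its columns, so there are finitely many.
   Conversely, a unit u of Z[z] yields the frieze of height 1 whose middle row
   alternates u and 2 u^-1, so finitely many friezes give finitely many units.
   Finitely many units forces every unit onto the unit circle, which fails for
   the cyclotomic unit (z^a - 1) / (z - 1) as soon as some a <> 1, -1 is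
   invertible modulo d, i.e. as soon as d is not in {1, 2, 3, 4, 6}.
   Discreteness forces the real element z + z^-1 of Z[z] to be an integer t,
   and then z^2 = t z - 1 with |t| <= 2. *)

Section ZringClosure.
Variable z : algC.

Lemma ZringP x : Zring z x <-> exists p : {poly int}, x = (map_poly intr p).[z].
Proof.
have size_intr (p : {poly int}) : size (map_poly intr p : {poly algC}) = size p.
  by apply: size_map_inj_poly; [exact: intr_inj|].
split=> [[s ->]|[p ->]].
  exists (Poly s); rewrite (@horner_coef_wide _ (size s)) ?size_intr ?size_Poly //.
  by apply: eq_bigr => i _; rewrite coef_map coef_Poly.
exists p; rewrite (@horner_coef_wide _ (size p)) ?size_intr //.
by apply: eq_bigr => i _; rewrite coef_map.
Qed.

Lemma ZringD x y : Zring z x -> Zring z y -> Zring z (x + y).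
Proof.
move=> /ZringP[p ->] /ZringP[q ->]; apply/ZringP; exists (p + q).
by rewrite rmorphD hornerD.
Qed.

Lemma ZringM x y : Zring z x -> Zring z y -> Zring z (x * y).
Proof.
move=> /ZringP[p ->] /ZringP[q ->]; apply/ZringP; exists (p * q).
by rewrite rmorphM hornerM.
Qed.

Lemma ZringN x : Zring z x -> Zring z (- x).
Proof.
by move=> /ZringP[p ->]; apply/ZringP; exists (- p); rewrite rmorphN hornerN.
Qed.

Lemma ZringB x y : Zring z x -> Zring z y -> Zring z (x - y).
Proof. by move=> zx zy; apply: ZringD => //; apply: ZringN. Qed.

Lemma Zring_int (k : int) : Zring z k%:~R.
Proof. by apply/ZringP; exists k%:P; rewrite map_polyC hornerC. Qed.

Lemma Zring0 : Zring z 0. Proof. exact: (Zring_int 0). Qed.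
Lemma Zring1 : Zring z 1. Proof. exact: (Zring_int 1). Qed.

Lemma Zring_gen : Zring z z.
Proof. by apply/ZringP; exists 'X; rewrite map_polyX hornerX. Qed.

Lemma ZringX x k : Zring z x -> Zring z (x ^+ k).
Proof.
by move=> zx; elim: k => [|k IHk]; [exact: Zring1 | rewrite exprS; apply: ZringM].
Qed.

Lemma Zring_sum (I : Type) (r : seq I) (Q : pred I) (F : I -> algC) :
  (forall i, Q i -> Zring z (F i)) -> Zring z (\sum_(i <- r | Q i) F i).
Proof. by move=> zF; apply: big_ind => //; [exact: Zring0 | exact: ZringD]. Qed.

End ZringClosure.

Section FriezeFiniteness.
Variables (n : nat) (P : algC -> Prop).
Hypothesis P_norm_ge1 : forall x, P x -> 1 <= `|x|.

Definition frow (c : int -> int -> algC) (i : int) (r : nat) := c i (i + r%:Z).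

(* [frow_bound s] bounds the entries [c_{i,i+n+1-s}]: the diagonal [c_{i,i+n+1}]
   is a sum of [n+1] inverses of entries of norm at least 1 ([frow_succ]), and
   the determinant rule writes each entry of the next diagonal as a product of
   two entries of the previous one, minus 1, divided by an entry of norm >= 1. *)
Fixpoint frow_bound (s : nat) : algC :=
  if s is s'.+1 then frow_bound s' ^+ 2 + 1 else n.+1%:R.

Lemma frow_bound_ge1 s : 1 <= frow_bound s.
Proof.
elim: s => [|s IHs] /=; first by rewrite ler1n.
by rewrite (le_trans IHs) // expr2 (le_trans (ler_peMr _ IHs)) ?lerDl ?(le_trans ler01).
Qed.

Lemma frow_bound_le : {homo frow_bound : s s' / (s <= s')%N >-> s <= s'}.
Proof.
apply: homo_leq => [x|y x t|s]; [exact: lexx | exact: le_trans |].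
have b1 := frow_bound_ge1 s.
by rewrite /= expr2 (le_trans (ler_peMr _ b1)) ?lerDl ?(le_trans ler01).
Qed.

Section FriezeEntries.
Variable c : int -> int -> algC.
Hypothesis c_frieze : is_frieze n P c.

Lemma frow0 i : frow c i 0 = 0.
Proof. by case: c_frieze => h _ _ _; rewrite -(h i).1; congr (c _ _); lia. Qed.

Lemma frow1 i : frow c i 1 = 1.
Proof. by case: c_frieze => _ h _ _; rewrite -(h i).1; congr (c _ _); lia. Qed.

Lemma frow_top i : frow c i n.+2 = 1.
Proof. by case: c_frieze => _ h _ _; rewrite -(h i).2; congr (c _ _); lia. Qed.

Lemma frow_end i : frow c i n.+3 = 0.
Proof. by case: c_frieze => h _ _ _; rewrite -(h i).2; congr (c _ _); lia. Qed.

Lemma frowP i r : (2 <= r <= n.+1)%N -> P (frow c i r).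
Proof. by case: c_frieze => _ _ h _ r_range; apply: h; lia. Qed.

Lemma frow_det i r : (1 <= r <= n.+2)%N ->
  frow c i r * frow c (i + 1) r - frow c i r.+1 * frow c (i + 1) r.-1 = 1.
Proof.
case: c_frieze => _ _ _ h r_range; rewrite -(h i (i + r%:Z)); last lia.
by congr (_ * _ - _ * _); congr (c _ _); lia.
Qed.

Lemma frow_norm_ge1 i r : (1 <= r <= n.+2)%N -> 1 <= `|frow c i r|.
Proof.
move=> r_range; have [->|r1] := eqVneq r 1%N; first by rewrite frow1 normr1.
have [->|r2] := eqVneq r n.+2; first by rewrite frow_top normr1.
by apply: P_norm_ge1; apply: frowP; lia.
Qed.

Lemma frow_neq0 i r : (1 <= r <= n.+2)%N -> frow c i r != 0.
Proof. by move/(frow_norm_ge1 i); apply: contraTneq => ->; rewrite normr0 ler10. Qed.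

Lemma frow_succ i s : (s <= n.+1)%N ->
  frow c (i + 1) s = frow c i s.+1 * \sum_(t < s) (frow c i t.+1 * frow c i t.+2)^-1.
Proof.
elim: s => [|s IHs] s_le; first by rewrite frow0 big_ord0 mulr0.
have := frow_det i s.+1 ltac:(lia); rewrite /= IHs; last lia.
have a0 := frow_neq0 i s.+1 ltac:(lia); have b0 := frow_neq0 i s.+2 ltac:(lia).
rewrite big_ord_recr /=.
set a := frow c i s.+1; set b := frow c i s.+2; set S := \sum_(_ < _) _ => det.
have -> : frow c (i + 1) s.+1 = (1 + b * (a * S)) / a by rewrite -det; field.
by field; rewrite a0 b0.
Qed.

Lemma frow_penult_norm_le i : `|frow c i n.+1| <= n.+1%:R.
Proof.
rewrite -(subrK 1 i) frow_succ // frow_top mul1r.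
apply: le_trans (ler_norm_sum _ _ _) _.
apply: le_trans (_ : \sum_(t < n.+1) (1 : algC) <= _); last by rewrite sumr_const card_ord.
apply: ler_sum => t _; have t_lt := ltn_ord t.
have e1 := frow_norm_ge1 (i - 1) t.+1 ltac:(lia).
have e2 := frow_norm_ge1 (i - 1) t.+2 ltac:(lia).
by rewrite normfV normrM invf_le1 ?mulr_ege1 // (lt_le_trans ltr01) ?mulr_ege1.
Qed.

Lemma frow_norm_le s i : (s < n)%N -> `|frow c i (n.+1 - s)| <= frow_bound s.
Proof.
elim: s i => [|s IHs] i s_lt; first by rewrite subn0 frow_penult_norm_le.
set r := (n.+1 - s)%N; have -> : (n.+1 - s.+1)%N = r.-1 by rewrite /r; lia.
have := frow_det (i - 1) r ltac:(rewrite /r; lia); rewrite subrK => det.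
have e1 := frow_norm_ge1 (i - 1) r.+1 ltac:(rewrite /r; lia).
have -> : frow c i r.-1 = (frow c (i - 1) r * frow c i r - 1) / frow c (i - 1) r.+1.
  by rewrite -det; field; apply: frow_neq0; rewrite /r; lia.
rewrite normrM normfV ler_pdivrMr ?(lt_le_trans ltr01) //.
have b0 : 0 <= frow_bound s.+1 := le_trans ler01 (frow_bound_ge1 s.+1).
rewrite (le_trans (ler_normB _ _)) // normr1 /= (le_trans _ (ler_peMr _ e1)) //.
by rewrite lerD2r normrM expr2 ler_pM ?IHs //; lia.
Qed.

Lemma frow_mem (L : seq algC) :
  (forall x, P x -> `|x| <= frow_bound n -> x \in L) ->
  forall i r, (r <= n.+3)%N -> frow c i r \in [:: 0, 1 & L].
Proof.
move=> PL i r r_le.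
have [->|r0] := eqVneq r 0%N; first by rewrite frow0 mem_head.
have [->|r1] := eqVneq r 1%N; first by rewrite frow1 !inE eqxx orbT.
have [->|r2] := eqVneq r n.+2; first by rewrite frow_top !inE eqxx orbT.
have [->|r3] := eqVneq r n.+3; first by rewrite frow_end mem_head.
rewrite !inE PL ?orbT; first by []; first by apply: frowP; lia.
have := @frow_norm_le (n.+1 - r) i; rewrite subKn; last lia.
by move=> /(_ ltac:(lia)) /le_trans; apply; apply: frow_bound_le; lia.
Qed.

End FriezeEntries.

Definition frow_agree (c c' : int -> int -> algC) i :=
  forall r, (r <= n.+3)%N -> frow c i r = frow c' i r.

Section Agreement.
Variables c c' : int -> int -> algC.
Hypotheses (c_frieze : is_frieze n P c) (c'_frieze : is_frieze n P c').

Lemma frow_agree_succ i : frow_agree c c' i -> frow_agree c c' (i + 1).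
Proof.
move=> agree r r_le.
have [->|r2] := eqVneq r n.+2; first by rewrite !frow_top.
have [->|r3] := eqVneq r n.+3; first by rewrite !frow_end.
rewrite !frow_succ // ?agree; try lia.
by congr (_ * _); apply: eq_bigr => t _; rewrite !agree //; have := ltn_ord t; lia.
Qed.

Lemma frow_agree_ge i0 i : frow_agree c c' i0 -> i0 <= i -> frow_agree c c' i.
Proof.
move=> agree i0_le; have [k ->] : exists k : nat, i = i0 + k%:Z.
  by exists (absz (i - i0)); lia.
elim: k => [|k IHk]; first by rewrite addr0.
by rewrite -addn1 PoszD addrA; apply: frow_agree_succ.
Qed.
End Agreement.

Definition frieze_flip (c : int -> int -> algC) i j := c (- j) (- i).

Lemma frieze_flipP c : is_frieze n P c -> is_frieze n P (frieze_flip c).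
Proof.
case=> h0 h1 hP hdet; split=> [i|i|i j ij|i j ij]; rewrite /frieze_flip.
- by rewrite (h0 (- i)).1 -(h0 (- (i + n%:Z + 3))).2; split=> //; congr (c _ _); lia.
- split; [rewrite -(h1 (- (i + 1))).1 | rewrite -(h1 (- (i + n%:Z + 2))).2];
    by congr (c _ _); lia.
- by apply: hP; lia.
- rewrite -(hdet (- (j + 1)) (- (i + 1))); last lia.
  by rewrite [X in _ = X - _]mulrC; congr (_ * _ - _ * _); congr (c _ _); lia.
Qed.

(* The column [c_{-r,0}] is row 0 of the flipped frieze; propagating rows
   forward in the flipped frieze and then in [c] itself reaches every entry. *)
Lemma frieze_agree_column c c' : is_frieze n P c -> is_frieze n P c' ->
  (forall r, (r <= n.+3)%N -> c (- r%:Z) 0 = c' (- r%:Z) 0) -> frieze_agree n c c'.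
Proof.
move=> c_frieze c'_frieze col.
have flip0 : frow_agree (frieze_flip c) (frieze_flip c') 0.
  by move=> r r_le; rewrite /frow /frieze_flip add0r oppr0; apply: col.
have agree_neg p q : q <= 0 -> p <= q <= p + n%:Z + 3 -> c p q = c' p q.
  move=> q_le pq.
  have := frow_agree_ge _ _ (frieze_flipP _ c_frieze) (frieze_flipP _ c'_frieze)
    0 (- q) flip0 ltac:(lia) (absz (q - p)) ltac:(lia).
  by rewrite /frow /frieze_flip opprK (_ : - (- q + (absz (q - p))%:Z) = p) //; lia.
have agree_start : frow_agree c c' (- (n%:Z + 3)).
  by move=> r r_le; apply: agree_neg; lia.
move=> p q pq; have [|q_gt] := lerP q 0; first by move/agree_neg; apply.
have := frow_agree_ge _ _ c_frieze c'_frieze _ p agree_start ltac:(lia)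
  (absz (q - p)) ltac:(lia).
by rewrite /frow (_ : p + (absz (q - p))%:Z = q) //; lia.
Qed.

Fixpoint words (L : seq algC) (k : nat) : seq (seq algC) :=
  if k is k'.+1 then [seq x :: s | x <- L, s <- words L k'] else [:: [::]].

Lemma words_mem L s : all (mem L) s -> s \in words L (size s).
Proof.
by elim: s => //= x s IHs /andP[Lx Ls]; apply: allpairs_f => //; apply: IHs.
Qed.

Definition frieze_column (c : int -> int -> algC) :=
  [seq c (- r%:Z) 0 | r <- iota 0 n.+4].

Hypothesis P_bounded_finite :
  forall B : algC, exists L : seq algC, forall x, P x -> `|x| <= B -> x \in L.

Theorem friezes_finite : finitely_many_friezes n P.
Proof.
have [L PL] := P_bounded_finite (frow_bound n).
set C := words [:: 0, 1 & L] n.+4.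
pose choose_frieze (s : seq algC) :=
  epsilon (inhabits (fun _ _ : int => 0 : algC))
    (fun c => is_frieze n P c /\ frieze_column c = s).
exists (size C), (fun k => choose_frieze (nth [::] C k)) => c c_frieze.
have colC : frieze_column c \in C.
  have := words_mem [:: 0, 1 & L] (frieze_column c).
  rewrite /frieze_column size_map size_iota; apply.
  apply/allP => x /mapP[r]; rewrite mem_iota add0n => /andP[_ r_lt] ->.
  have := frow_mem _ c_frieze _ PL (- r%:Z) r ltac:(lia).
  by rewrite /frow addNr.
have col_idx : (index (frieze_column c) C < size C)%N by rewrite index_mem.
exists (Ordinal col_idx); rewrite /= nth_index //.
have [c'_frieze c'_col] : is_frieze n P (choose_frieze (frieze_column c)) /\
    frieze_column (choose_frieze (frieze_column c)) = frieze_column c.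
  apply: (epsilon_spec _ (fun c' => is_frieze n P c' /\ frieze_column c' = _)).
  by exists c.
apply: frieze_agree_column => // r r_le.
have := congr1 (fun s => nth 0 s r) c'_col.
by rewrite /frieze_column !(nth_map 0%N) ?size_iota // nth_iota.
Qed.

End FriezeFiniteness.

Lemma sqr_lt_bound (x : int) (M : nat) : x ^+ 2 < M%:Z -> - M%:Z <= x <= M%:Z.
Proof. by rewrite expr2; have [x0|x0] := lerP 0 x; nia. Qed.

Lemma quad_form_bounds (a b t : int) (K : nat) : -1 <= t <= 1 ->
  a ^+ 2 + t * a * b + b ^+ 2 < K%:Z ->
  - (2 * K)%:Z <= a <= (2 * K)%:Z /\ - (2 * K)%:Z <= b <= (2 * K)%:Z.
Proof.
rewrite !expr2 => t_range QK.
have sq_ge0 (x : int) : 0 <= x * x by rewrite -expr2 sqr_ge0.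
have := sq_ge0 (a - b); have := sq_ge0 (a + b).
have : t = -1 \/ t = 0 \/ t = 1 by lia.
by case=> [tv|[tv|tv]]; rewrite tv in QK; split; apply: sqr_lt_bound; rewrite expr2; nia.
Qed.

Definition int_range (M : nat) := [seq i%:Z - M%:Z | i <- iota 0 (2 * M).+1].

Lemma int_rangeP (M : nat) (a : int) : - M%:Z <= a <= M%:Z -> a \in int_range M.
Proof.
by move=> a_range; apply/mapP; exists (absz (a + M%:Z)); rewrite ?mem_iota; lia.
Qed.

Section QuadraticLattice.
Variables (z : algC) (t : int).
Hypotheses (t_range : -2 <= t <= 2) (z_quad : z ^+ 2 = t%:~R * z - 1).
Hypothesis z_norm1 : `|z| = 1.

Lemma Zring_lin x : Zring z x -> exists a b : int, x = a%:~R + b%:~R * z.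
Proof.
pose lin y := exists a b : int, y = a%:~R + b%:~R * z.
have linD y y' : lin y -> lin y' -> lin (y + y').
  by move=> [a [b ->]] [a' [b' ->]]; exists (a + a'), (b + b'); rewrite !rmorphD; ring.
have linZ (k : int) y : lin y -> lin (k%:~R * y).
  by move=> [a [b ->]]; exists (k * a), (k * b); rewrite !rmorphM; ring.
have linX i : lin (z ^+ i).
  elim: i => [|i [a [b IHi]]]; first by exists 1, 0; rewrite mul0r addr0.
  exists (- b), (a + t * b); rewrite exprS IHi mulrDr mulrCA -expr2 z_quad.
  by rewrite rmorphN rmorphD rmorphM; ring.
move=> [s ->]; apply: (big_ind lin) => [|y y'|i _]; [|exact: linD|exact: linZ].
by exists 0, 0; rewrite mul0r addr0.
Qed.

Lemma conj_quad : z^* = t%:~R - z.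
Proof.
have z0 : z != 0 by rewrite -normr_eq0 z_norm1 oner_neq0.
by apply: (mulfI z0); rewrite -normCK z_norm1 expr1n mulrBr -expr2 z_quad; ring.
Qed.

Lemma norm_lin2 a b : `|a%:~R + b%:~R * z| ^+ 2 = (a ^+ 2 + t * a * b + b ^+ 2)%:~R.
Proof.
rewrite normCK rmorphD rmorphM /= !rmorph_int conj_quad.
have -> : (a%:~R + b%:~R * z) * (a%:~R + b%:~R * (t%:~R - z)) =
    a%:~R ^+ 2 + t%:~R * a%:~R * b%:~R + b%:~R ^+ 2 - b%:~R ^+ 2 * (z ^+ 2 - (t%:~R * z - 1)) :> algC
  by ring.
by rewrite z_quad subrr mulr0 subr0 !(rmorphD, rmorphM, rmorphXn).
Qed.

Lemma Zring_norm_ge1 x : Zring z x -> x != 0 -> 1 <= `|x|.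
Proof.
move=> /Zring_lin[a [b ->]] x0; rewrite -(expr_ge1 (n := 2)) // norm_lin2.
have : 0 < `|a%:~R + b%:~R * z| ^+ 2 by rewrite exprn_gt0 // normr_gt0.
by rewrite norm_lin2 ltr0z -[1]/(1%:~R) ler_int.
Qed.

Lemma Zring_lin_bounded x (K : nat) : Zring z x -> `|x| ^+ 2 < K%:R ->
  exists a b : int, [/\ - (2 * K)%:Z <= a <= (2 * K)%:Z,
                        - (2 * K)%:Z <= b <= (2 * K)%:Z & x = a%:~R + b%:~R * z].
Proof.
move=> /Zring_lin[a [b ->]]; rewrite norm_lin2 -[K%:R]/(K%:Z%:~R) ltr_int => QK.
have [t2|t_ne2] := eqVneq t 2.
  have z1 : z = 1.
    have : (z - 1) ^+ 2 = 0 by rewrite sqrrB z_quad t2; ring.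
    by move/eqP; rewrite expf_eq0 subr_eq0 => /eqP.
  exists (a + b), 0; split; last by rewrite z1 mul0r addr0 rmorphD mulr1.
    apply: sqr_lt_bound; rewrite t2 in QK.
    by rewrite (_ : (a + b) ^+ 2 = a ^+ 2 + 2 * a * b + b ^+ 2); [lia | ring].
  by lia.
have [tN2|t_neN2] := eqVneq t (-2).
  have zN1 : z = -1.
    have : (z + 1) ^+ 2 = 0 by rewrite sqrrD z_quad tN2 rmorphN; ring.
    by move/eqP; rewrite expf_eq0 addr_eq0 => /eqP.
  exists (a - b), 0; split; last by rewrite zN1 mul0r addr0 rmorphB mulrN1.
    apply: sqr_lt_bound; rewrite tN2 in QK.
    by rewrite (_ : (a - b) ^+ 2 = a ^+ 2 + -2 * a * b + b ^+ 2); [lia | ring].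
  by lia.
have [a_range b_range] := @quad_form_bounds a b t K ltac:(lia) QK.
by exists a, b.
Qed.

Lemma Zring_bounded_finite (B : algC) :
  exists L : seq algC, forall x, Zring z x -> `|x| <= B -> x \in L.
Proof.
set K := Num.Def.archi_bound (B ^+ 2).
exists [seq a%:~R + b%:~R * z | a <- int_range (2 * K), b <- int_range (2 * K)].
move=> x zx xB; have B0 : 0 <= B := le_trans (normr_ge0 x) xB.
have /(Zring_lin_bounded _ _ zx)[a [b [a_range b_range ->]]] : `|x| ^+ 2 < K%:R.
  by rewrite (le_lt_trans _ (archi_boundP _)) ?exprn_ge0 // ler_pXn2r ?nnegrE.
by apply/allpairsP; exists (a, b); split; rewrite ?int_rangeP.
Qed.

End QuadraticLattice.

Lemma unity_root_norm1 (w : algC) (e : nat) : (0 < e)%N -> w ^+ e = 1 -> `|w| = 1.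
Proof.
by move=> e_gt0 we; apply/eqP; rewrite -(pexpr_eq1 e_gt0) ?normr_ge0 // -normrX we normr1.
Qed.

Lemma small_orders_dvd (d k : nat) :
  (0 < d)%N -> k \in [:: 1; 2; 3; 4; 6]%N -> (d %| k)%N -> d \in [:: 1; 2; 3; 4; 6]%N.
Proof.
move=> d_gt0; rewrite !inE => /orP[|/orP[|/orP[|/orP[]]]] /eqP -> d_dvd;
  have := dvdn_leq (ltn0Sn _) d_dvd; by case: d d_gt0 d_dvd => [|[|[|[|[|[|[|d]]]]]]].
Qed.

Lemma quad_of_factor (z p s : algC) (t : int) (d : nat) : z ^+ d = 1 -> p != 0 ->
  p * (z ^+ 2 - t%:~R * z + 1) = (z ^+ d - 1) * s -> z ^+ 2 = t%:~R * z - 1.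
Proof.
move=> zd p0; rewrite zd subrr mul0r => /eqP; rewrite mulf_eq0 (negbTE p0) /=.
by move/eqP=> q0; apply/eqP; rewrite -subr_eq0 -q0; apply/eqP; ring.
Qed.

Lemma small_order_quad (d : nat) (z : algC) : d.-primitive_root z ->
  d \in [:: 1; 2; 3; 4; 6]%N -> exists2 t : int, -2 <= t <= 2 & z ^+ 2 = t%:~R * z - 1.
Proof.
move=> z_prim d_small; have zd := prim_expr_order z_prim.
have zk_neq1 k : ~~ (d %| k)%N -> z ^+ k - 1 != 0.
  by rewrite subr_eq0 -(prim_order_dvd z_prim).
move: d_small; rewrite !inE => /orP[|/orP[|/orP[|/orP[]]]] /eqP d_eq; subst d.
- exists 2 => //; apply: (quad_of_factor _ _ (z - 1) _ _ zd (oner_neq0 _)).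
  by rewrite expr1; ring.
- exists (-2) => //; apply: (quad_of_factor _ _ (z + 1) _ _ zd (zk_neq1 1%N isT)).
  by rewrite rmorphN; ring.
- exists (-1) => //; apply: (quad_of_factor _ _ 1 _ _ zd (zk_neq1 1%N isT)).
  by rewrite rmorphN; ring.
- exists 0 => //; apply: (quad_of_factor _ _ 1 _ _ zd (zk_neq1 2%N isT)).
  by rewrite mul0r; ring.
exists 1 => //; have z_neqN1 : z + 1 != 0.
  apply: contraTneq (zk_neq1 2%N isT) => /eqP; rewrite addr_eq0 => /eqP ->.
  by rewrite sqrrN expr1n subrr eqxx.
apply: (quad_of_factor _ _ 1 _ _ zd (mulf_neq0 (zk_neq1 3%N isT) z_neqN1)).
by ring.
Qed.

Lemma quad_root_small_order (d : nat) (z : algC) (t : int) : d.-primitive_root z ->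
  -2 <= t <= 2 -> z ^+ 2 = t%:~R * z - 1 -> d \in [:: 1; 2; 3; 4; 6]%N.
Proof.
move=> z_prim t_range z_quad.
suff [k k_small /eqP zk] : exists2 k, k \in [:: 1; 2; 3; 4; 6]%N & z ^+ k = 1.
  by apply: (small_orders_dvd _ _ (prim_order_gt0 z_prim) k_small); rewrite (prim_order_dvd z_prim).
have root_of q (k : nat) : z ^+ k - 1 = q * (z ^+ 2 - (t%:~R * z - 1)) -> z ^+ k = 1.
  by rewrite z_quad subrr mulr0 => /eqP; rewrite subr_eq0 => /eqP.
have : t = -2 \/ t = -1 \/ t = 0 \/ t = 1 \/ t = 2 by lia.
case=> [|[|[|[|]]]] t_eq; rewrite t_eq in z_quad root_of.
- exists 2%N => //; have : (z + 1) ^+ 2 = 0 by rewrite sqrrD z_quad rmorphN; ring.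
  by move/eqP; rewrite expf_eq0 addr_eq0 => /eqP ->; rewrite sqrrN expr1n.
- by exists 3%N => //; apply: (root_of (z - 1)); rewrite rmorphN; ring.
- by exists 4%N => //; apply: (root_of (z ^+ 2 - 1)); ring.
- by exists 6%N => //; apply: (root_of ((z ^+ 3 - 1) * (z + 1))); ring.
exists 1%N => //; have : (z - 1) ^+ 2 = 0 by rewrite sqrrB z_quad; ring.
by move/eqP; rewrite expf_eq0 subr_eq0 => /eqP ->; rewrite expr1n.
Qed.

Lemma finite_units_norm1 (z u v : algC) : finite_units_Zring z ->
  Zring z u -> Zring z v -> u * v = 1 -> `|u| = 1.
Proof.
move=> [s units_s] zu zv uv; apply/eqP/negPn/negP => u_ne1.
have u0 : u != 0 by apply: contra_eq_neq uv => ->; rewrite mul0r eq_sym oner_neq0.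
have pow_inj : injective (fun k : nat => u ^+ k).
  suff pow_le i j : (i <= j)%N -> u ^+ i = u ^+ j -> i = j.
    by move=> i j uij; case/orP: (leq_total i j) => ij; [|apply/esym]; apply: pow_le.
  move=> ij; rewrite -(subnKC ij) exprD -[LHS]mulr1 => /(mulfI (expf_neq0 i u0)) uk.
  suff : (j - i = 0)%N by lia.
  apply/eqP; apply: contraNT u_ne1; rewrite -lt0n => k_gt0.
  by rewrite -(pexpr_eq1 k_gt0) ?normr_ge0 // -normrX -uk normr1.
have pow_uniq : uniq [seq u ^+ k | k <- iota 0 (size s).+1].
  by rewrite map_inj_uniq ?iota_uniq.
have pow_s : {subset [seq u ^+ k | k <- iota 0 (size s).+1] <= s}.
  move=> _ /mapP[k _ ->]; apply: units_s; first exact: ZringX.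
  by exists (v ^+ k); [exact: ZringX | rewrite -exprMn uv expr1n].
by have := uniq_leq_size pow_uniq pow_s; rewrite size_map size_iota ltnn.
Qed.

Lemma unit_circle_dist1_eq (p q : algC) : `|p| = 1 -> `|q| = 1 ->
  `|p - 1| = `|q - 1| -> p = q \/ p * q = 1.
Proof.
move=> p1 q1 pq1.
have p0 : p != 0 by rewrite -normr_eq0 p1 oner_neq0.
have q0 : q != 0 by rewrite -normr_eq0 q1 oner_neq0.
have dist2 (x : algC) : `|x| = 1 -> `|x - 1| ^+ 2 = (x - 1) * (x^-1 - 1).
  by move=> x1; rewrite normCK rmorphB rmorph1 invC_norm x1 expr1n invr1 mul1r.
have : (p - q) * (1 - p * q) = 0.
  have -> : (p - q) * (1 - p * q) = p * q * ((p - 1) * (p^-1 - 1) - (q - 1) * (q^-1 - 1)).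
    by field; rewrite p0 q0.
  by rewrite -dist2 // -dist2 // pq1 subrr mulr0.
move/eqP; rewrite mulf_eq0 subr_eq0 subr_eq0 eq_sym.
by case/orP=> /eqP; [left | right].
Qed.

(* [u = (z^a - 1) / (z - 1)] has inverse [(z - 1) / (z^a - 1)] because [z] is a
   power of the primitive root [z^a]; [|u| = 1] would force [z^a = z^(+-1)]. *)
Lemma cyclotomic_unit (z : algC) (e a : nat) : e.-primitive_root z ->
  (1 < a)%N -> (a.+1 < e)%N -> coprime a e ->
  exists u v, [/\ Zring z u, Zring z v, u * v = 1 & `|u| != 1].
Proof.
move=> z_prim a_gt1 a_lt a_cop.
have zk_neq1 k : (0 < k < e)%N -> z ^+ k != 1.
  by move=> /andP[k_gt0 k_lt]; rewrite -(prim_order_dvd z_prim) gtnNdvd.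
have e_gt0 := prim_order_gt0 z_prim.
have z1 := unity_root_norm1 _ _ e_gt0 (prim_expr_order z_prim).
set eta := z ^+ a.
have eta_prim : e.-primitive_root eta by rewrite prim_root_exp_coprime.
have [b z_eta] := prim_rootP eta_prim (prim_expr_order z_prim).
set u := \sum_(k < a) z ^+ k; set v := \sum_(k < b) eta ^+ k.
have z_ne1 : z - 1 != 0 by rewrite subr_eq0 -[z]expr1 zk_neq1 //; lia.
have uv : u * v = 1.
  apply: (mulfI z_ne1); rewrite mulr1 mulrA -subrX1 -/eta -subrX1.
  by rewrite -z_eta.
exists u, v; split=> //.
- by apply: Zring_sum => k _; apply/ZringX/Zring_gen.
- by apply: Zring_sum => k _; apply/ZringX/ZringX/Zring_gen.
apply/eqP=> u1.
have eta1 : `|eta| = 1 by rewrite normrX z1 expr1n.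
have : `|eta - 1| = `|z - 1| by rewrite subrX1 normrM u1 mulr1.
case/(unit_circle_dist1_eq _ _ eta1 z1) => [eta_z | eta_z1].
  have za : z ^+ a.-1 = 1.
    apply: (mulIf (_ : z != 0)); first by rewrite -normr_eq0 z1 oner_neq0.
    by rewrite mul1r -exprSr prednK 1?ltnW // -/eta eta_z.
  by move: (zk_neq1 a.-1 ltac:(lia)); rewrite za eqxx.
by move: (zk_neq1 a.+1 ltac:(lia)); rewrite exprSr -/eta eta_z1 eqxx.
Qed.

Lemma nontrivial_unit_mod (e : nat) : (0 < e)%N -> e \notin [:: 1; 2; 3; 4; 6]%N ->
  exists a, [/\ 1 < a, a.+1 < e & coprime a e]%N.
Proof.
rewrite !inE => e_gt0 e_big.
have oddP k : (k %% 2 = 1)%N -> odd k by rewrite modn2; case: odd.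
have [e_odd|e_even] := boolP (odd e).
  by exists 2%N; rewrite coprime2n e_odd; split=> //; lia.
have e_mod2 : (e %% 2 = 0)%N by rewrite modn2 (negbTE e_even).
have [e_mod4|e_mod4] := eqVneq (e %% 4)%N 0%N.
  set a := (e %/ 2 - 1)%N; exists a; split; try lia.
  rewrite (_ : e = 2 * a + 2)%N; last lia.
  by rewrite /coprime gcdnMDl -/(coprime a 2) coprimen2 oddP //; lia.
set a := (e %/ 2 - 2)%N; exists a; split; try lia.
rewrite (_ : e = 2 * a + 2 ^ 2)%N; last lia.
by rewrite /coprime gcdnMDl -/(coprime a _) coprime_pexpr // coprimen2 oddP //; lia.
Qed.

Lemma finite_units_small_order (d : nat) (z : algC) : d.-primitive_root z ->
  finite_units_Zring z -> d \in [:: 1; 2; 3; 4; 6]%N.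
Proof.
move=> z_prim units_fin; apply/negPn/negP => d_big.
have [a [a_gt1 a_lt a_cop]] := nontrivial_unit_mod _ (prim_order_gt0 z_prim) d_big.
have [u [v [zu zv uv u_ne1]]] := cyclotomic_unit _ _ _ z_prim a_gt1 a_lt a_cop.
by rewrite (finite_units_norm1 _ _ _ units_fin zu zv uv) eqxx in u_ne1.
Qed.

Section DiscreteZring.
Variable z : algC.
Hypothesis Zring_discrete : discrete_subset (Zring z).

(* The powers of [w] are in [Zring z] and tend to 0. *)
Lemma Zring_discrete_small_eq0 w : Zring z w -> 2 * `|w| <= 1 -> w = 0.
Proof.
move=> zw w_small; apply/eqP/negPn/negP => w0.
have [eps eps_gt0 eps_le] := Zring_discrete 0 (Zring0 z).
set N := Num.Def.archi_bound eps^-1.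
have N_gt : eps^-1 < N%:R by rewrite archi_boundP // invr_ge0 ltW.
have := eps_le _ (ZringX _ _ N zw) (expf_neq0 N w0); rewrite subr0 normrX => eps_le_wN.
have : eps * 2 ^+ N <= 1.
  rewrite (le_trans (ler_wpM2r _ eps_le_wN)) ?exprn_ge0 ?ler0n //.
  by rewrite -exprMn mulrC exprn_ile1 ?mulr_ge0 ?ler0n.
have eps_2N : 1 < eps * 2 ^+ N.
  by rewrite -ltr_pdivrMl // mulr1 (lt_le_trans N_gt) // -natrX ler_nat ltnW // ltn_expl.
by move/(lt_le_trans eps_2N); rewrite ltxx.
Qed.

Lemma Zring_discrete_real_int x : Zring z x -> x \is Num.real -> x = (Num.floor x)%:~R.
Proof.
move=> zx x_real; set f := x - (Num.floor x)%:~R.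
have zf : Zring z f by apply: ZringB => //; apply: Zring_int.
have /andP[f_ge0 f_lt1] : 0 <= f < 1.
  have /andP[floor_le floor_gt] := real_floor_itv x_real.
  by rewrite subr_ge0 floor_le ltrBlDl -[1]/(1%:~R) -rmorphD.
apply/eqP; rewrite -subr_eq0 -/f; apply/eqP.
have f_real : f \is Num.real by rewrite ger0_real.
have [f_small|f_big] := boolP (2 * f <= 1).
  by apply: Zring_discrete_small_eq0 => //; rewrite ger0_norm.
have f_gt : 1 < 2 * f by rewrite real_ltNge ?rpredM ?realn.
have : 1 - f = 0.
  apply: Zring_discrete_small_eq0; first by apply: ZringB => //; apply: Zring1.
  rewrite ger0_norm; last by rewrite subr_ge0 ltW.
  by rewrite mulrBr mulr1 lerBlDl {1}(_ : 2 = 1 + 1 :> algC) // lerD2r ltW.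
by move/eqP; rewrite subr_eq0 => /eqP f1; rewrite -f1 ltxx in f_lt1.
Qed.
End DiscreteZring.

Lemma discrete_small_order (d : nat) (z : algC) : d.-primitive_root z ->
  discrete_subset (Zring z) -> d \in [:: 1; 2; 3; 4; 6]%N.
Proof.
move=> z_prim disc; have d_gt0 := prim_order_gt0 z_prim.
have z1 := unity_root_norm1 _ _ d_gt0 (prim_expr_order z_prim).
have z0 : z != 0 by rewrite -normr_eq0 z1 oner_neq0.
have z_inv : z^-1 = z ^+ d.-1.
  by apply: (mulfI z0); rewrite mulfV // -exprS prednK // prim_expr_order.
set r := z + z^-1.
have zr : Zring z r by rewrite /r z_inv; apply: ZringD; [|apply: ZringX]; apply: Zring_gen.
have r_real : r \is Num.real.
  have zc : z^* = z^-1 by rewrite invC_norm z1 expr1n invr1 mul1r.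
  by apply/CrealP; rewrite rmorphD fmorphV /= zc invrK addrC.
have r_int := Zring_discrete_real_int _ disc _ zr r_real; set m := Num.floor r in r_int.
apply: (quad_root_small_order _ _ m z_prim).
  rewrite -ler_norml -(ler_int algC) intr_norm -r_int.
  by rewrite (le_trans (ler_normD _ _)) // normfV z1 invr1.
by rewrite -r_int /r mulrDl mulVf // expr2 addrK.
Qed.

Section SmallOrder.
Variables (d : nat) (z : algC).
Hypotheses (z_prim : d.-primitive_root z) (d_small : d \in [:: 1; 2; 3; 4; 6]%N).

Let z_norm1 : `|z| = 1.
Proof. exact: unity_root_norm1 _ _ (prim_order_gt0 z_prim) (prim_expr_order z_prim). Qed.

Lemma small_order_norm_ge1 x : Zring z x -> x != 0 -> 1 <= `|x|.
Proof.
have [t t_range z_quad] := small_order_quad _ _ z_prim d_small.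
exact: Zring_norm_ge1 _ _ z_quad z_norm1 x.
Qed.

Lemma small_order_bounded_finite (B : algC) :
  exists L : seq algC, forall x, Zring z x -> `|x| <= B -> x \in L.
Proof.
have [t t_range z_quad] := small_order_quad _ _ z_prim d_small.
exact: Zring_bounded_finite _ _ t_range z_quad z_norm1 B.
Qed.

Lemma small_order_discrete : discrete_subset (Zring z).
Proof.
move=> x zx; exists 1 => // y zy yx.
by apply: small_order_norm_ge1; [apply: ZringB | rewrite subr_eq0].
Qed.

Lemma small_order_finite_units : finite_units_Zring z.
Proof.
have [L L_units] := small_order_bounded_finite 1.
exists L => u zu [v zv uv]; apply: L_units => //.
have v0 : v != 0 by apply: contra_eq_neq uv => ->; rewrite mulr0 eq_sym oner_neq0.
have : `|u| * `|v| = 1 by rewrite -normrM uv normr1.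
by move=> <-; rewrite ler_peMr // small_order_norm_ge1.
Qed.

Lemma small_order_finite_friezes n :
  finitely_many_friezes n (fun x => Zring z x /\ x <> 0).
Proof.
apply: friezes_finite => [x [zx /eqP x0]|B]; first exact: small_order_norm_ge1.
by have [L L_B] := small_order_bounded_finite B; exists L => x [zx _]; apply: L_B.
Qed.

End SmallOrder.

Lemma odd_absz_add1 (i : int) : odd (absz (i + 1)) = ~~ odd (absz i).
Proof.
case: i => k; first by rewrite (_ : absz (k%:Z + 1) = k.+1) //; lia.
by rewrite (_ : absz (Negz k + 1) = k) /= ?negbK //; lia.
Qed.

Section UnitFrieze.
Variables (z u v : algC).
Hypotheses (zu : Zring z u) (zv : Zring z v) (uv : u * v = 1).

(* A frieze of height 1 is determined by its row [c_{i,i+2}], subject to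
   [c_{i,i+2} * c_{i+1,i+3} = 2]; we alternate [u] and [2 v]. *)
Definition unit_frieze_row (i k : int) : algC :=
  if k == 1 then 1
  else if k == 2 then (if odd (absz i) then 2 * v else u)
  else if k == 3 then 1 else 0.

Definition unit_frieze (i j : int) := unit_frieze_row i (j - i).

Lemma unit_frieze_row0 i : unit_frieze_row i 0 = 0. Proof. by []. Qed.
Lemma unit_frieze_row1 i : unit_frieze_row i 1 = 1. Proof. by []. Qed.
Lemma unit_frieze_row2 i : unit_frieze_row i 2 = if odd (absz i) then 2 * v else u.
Proof. by []. Qed.
Lemma unit_frieze_row3 i : unit_frieze_row i 3 = 1. Proof. by []. Qed.
Lemma unit_frieze_row4 i : unit_frieze_row i 4 = 0. Proof. by []. Qed.

Lemma unit_friezeP : is_frieze 1 (fun x => Zring z x /\ x <> 0) unit_frieze.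
Proof.
have u0 : u != 0 by apply: contra_eq_neq uv => ->; rewrite mul0r eq_sym oner_neq0.
have v0 : v != 0 by apply: contra_eq_neq uv => ->; rewrite mulr0 eq_sym oner_neq0.
split=> [i|i|i j ij|i j ij]; rewrite /unit_frieze.
- by rewrite subrr (_ : i + 1%:Z + 3 - i = 4) ?unit_frieze_row4; last lia.
- rewrite (_ : i + 1 - i = 1); last lia.
  by rewrite (_ : i + 1%:Z + 2 - i = 3) ?unit_frieze_row1 ?unit_frieze_row3; last lia.
- rewrite (_ : j - i = 2) ?unit_frieze_row2; last lia.
  case: ifP => _; split=> //; last by apply/eqP.
    by apply: ZringM => //; apply: (Zring_int z 2).
  by apply/eqP; rewrite mulf_neq0 ?pnatr_eq0.
rewrite (_ : j + 1 - (i + 1) = j - i); last lia.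
rewrite (_ : j + 1 - i = (j - i) + 1); last lia.
rewrite (_ : j - (i + 1) = (j - i) - 1); last lia.
have : j - i = 1 \/ j - i = 2 \/ j - i = 3 by lia.
case=> [|[|]] ->.
- rewrite (_ : 1 + 1 = 2 :> int) // (_ : 1 - 1 = 0 :> int) //.
  by rewrite unit_frieze_row0 unit_frieze_row1 mulr0 subr0 mulr1.
- rewrite (_ : 2 + 1 = 3 :> int) // (_ : 2 - 1 = 1 :> int) //.
  rewrite !unit_frieze_row2 unit_frieze_row3 unit_frieze_row1 odd_absz_add1.
  by case: odd => /=; (transitivity (2 * (u * v) - 1); [ring | rewrite uv; ring]).
rewrite (_ : 3 + 1 = 4 :> int) // (_ : 3 - 1 = 2 :> int) //.
by rewrite unit_frieze_row3 unit_frieze_row4 mul0r subr0 mulr1.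
Qed.

End UnitFrieze.

Lemma finite_friezes_finite_units (z : algC) :
  finitely_many_friezes 1 (fun x => Zring z x /\ x <> 0) -> finite_units_Zring z.
Proof.
move=> [N [f f_all]]; exists [seq f k 0 2 | k <- enum 'I_N] => u zu [v zv uv].
have [k agree] := f_all _ (unit_friezeP _ _ _ zu zv uv).
have -> : u = f k 0 2 by rewrite -agree // /unit_frieze subr0 unit_frieze_row2.
by apply/mapP; exists k; rewrite ?mem_enum.
Qed.

Theorem corollary3p10 (d : nat) (z : algC) :
  d.-primitive_root z ->
  [<-> (forall n : nat, finitely_many_friezes n (fun x => Zring z x /\ x <> 0));
       discrete_subset (Zring z);
       finite_units_Zring z;
       d \in [:: 1; 2; 3; 4; 6]%N].
Proof.
move=> z_prim; tfae.
- move=> /(_ 1%N)/finite_friezes_finite_units/(finite_units_small_order _ _ z_prim).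
  exact: small_order_discrete.
- move=> /(discrete_small_order _ _ z_prim).
  exact: small_order_finite_units.
- exact: finite_units_small_order.
- by move=> d_small n; apply: (small_order_finite_friezes _ _ z_prim d_small).
Qed.
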